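(* Let $n$ be a positive integer, $\pi\in\mathrm{NC}_B(n)$ and $\psi(\pi)=(\sigma,x)$. Write $i\sim_\pi j$ if $i,j$ lie in the same block of $\pi$. Then: (1) $x=\emptyset$ if and only if there is no $i\in[\pm n]$ with $i\sim_\pi -i$ and there are no positive integers $i,j$ with $i\sim_\pi -j$; (2) $x$ is an edge if and only if there is no $i$ with $i\sim_\pi -i$ and there are positive integers $i,j$ with $i\sim_\pi -j$; in this case there is a unique pair $(a,b)$ of positive integers with $a<b$ such that $b-a$ is minimal subject to $a\sim_\pi -b$, this $(a,b)$ is an edge of $\sigma$, and $x=(a,b)$; (3) $x$ is a block if and only if there is an $i$ with $i\sim_\pi -i$; in this case $x$ is the block consisting of the positive integers $i$ with $i\sim_\pi -i$.
   Context: $[\pm n]=\{1,\dots,n,-1,\dots,-n\}$. A partition of type $B_n$ is a partition $\pi$ of $[\pm n]$ such that $-B$ is a block whenever $B$ is, with at most one block satisfying $B=-B$; it is noncrossing if, in the linear order $1<\cdots<n<-1<\cdots<-n$, there are no $a<b<c<d$ with $a,c$ in one block and $b,d$ in another. $\mathrm{NC}_B(n)$ is the set of these; $\mathrm{NC}(n)$ is the set of noncrossing partitions of $[n]$. An edge of $\sigma\in\mathrm{NC}(n)$ is a pair $(i,j)$, $i<j$, with $i,j$ in a common block containing no integer strictly between them. The map $\psi$: given $\pi\in\mathrm{NC}_B(n)$, let $\eta$ be obtained by deleting all negative integers from the blocks of $\pi$ (discarding empty sets), and let $X$ be the set of blocks $A$ of $\eta$ such that the block of $\pi$ containing $A$ also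 contains a negative integer. Write $X=\{A_1,\dots,A_m\}$ with $\max A_1<\cdots<\max A_m$. Let $\sigma$ be obtained from $\eta$ by merging $A_i$ and $A_{m+1-i}$ for $i=1,\dots,\lfloor m/2\rfloor$; $x=\emptyset$ if $m=0$, $x=(\max A_{m/2},\min A_{m/2+1})$ if $m>0$ is even, $x=A_{(m+1)/2}$ if $m$ is odd; $\psi(\pi)=(\sigma,x)$. *)

From mathcomp Require Import all_boot.
Set Implicit Arguments. Unset Strict Implicit. Unset Printing Implicit Defensive.

(* Encoding of [±n] = {1,..,n,-1,..,-n}: the type 'I_n * bool.
   (k, false) stands for the positive integer k+1,
   (k, true)  stands for the negative integer -(k+1).
   [n] = {1,..,n} is encoded by 'I_n, k standing for k+1
   (so differences b - a are unchanged). *)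
Definition pm (n : nat) := ('I_n * bool)%type.

(* position in the linear order 1 < ... < n < -1 < ... < -n *)
Definition rk n (i : pm n) : nat := if i.2 then n + i.1 else i.1.

Definition negpm n (i : pm n) : pm n := (i.1, ~~ i.2).
Definition negset n (B : {set pm n}) : {set pm n} := [set negpm i | i in B].

Definition typeB_partition n (P : {set {set pm n}}) : Prop :=
  [/\ partition P [set: pm n],
      (forall B, B \in P -> negset B \in P)
    & (forall B C, B \in P -> C \in P -> negset B = B -> negset C = C -> B = C)].

Definition noncrossing_B n (P : {set {set pm n}}) : Prop :=
  forall B C, B \in P -> C \in P ->
  forall a b c d : pm n, rk a < rk b -> rk b < rk c -> rk c < rk d ->
    a \in B -> c \in B -> b \in C -> d \in C -> B = C.

Definition NCB n (P : {set {set pm n}}) : Prop :=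
  typeB_partition P /\ noncrossing_B P.

Definition sameblock n (P : {set {set pm n}}) (i j : pm n) : bool :=
  [exists B in P, (i \in B) && (j \in B)].

Definition is_edge n (S : {set {set 'I_n}}) (i j : 'I_n) : Prop :=
  i < j /\ exists2 B, B \in S &
    [/\ i \in B, j \in B & forall k : 'I_n, i < k -> k < j -> k \notin B].

Inductive xval (n : nat) :=
| XEmpty
| XEdge of nat & nat      (* 0-based labels as in 'I_n *)
| XBlock of {set 'I_n}.

Section Psi.
Variable n : nat.
Variable P : {set {set pm n}}.

Definition posB (B : {set pm n}) : {set 'I_n} := [set k | (k, false) \in B].
Definition hasneg (B : {set pm n}) : bool := [exists k, (k, true) \in B].

Definition eta_part : {set {set 'I_n}} :=
  [set posB B | B in [set B in P | posB B != set0]].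
Definition Xset : {set {set 'I_n}} :=
  [set posB B | B in [set B in P | (posB B != set0) && hasneg B]].

Definition maxs (A : {set 'I_n}) : nat := \max_(i in A) (i : nat).
Definition mins (A : {set 'I_n}) : nat := \big[minn/n]_(i in A) (i : nat).

Definition Xseq : seq {set 'I_n} :=
  sort (fun A C => maxs A <= maxs C) (enum Xset).
Definition mX : nat := size Xseq.
Definition As (j : nat) : {set 'I_n} := nth set0 Xseq j.  (* 0-based: As j = A_(j+1) *)

Definition psi_sigma : {set {set 'I_n}} :=
  [set A in eta_part | A \notin Xset] :|:
  [set As j :|: As (mX.-1 - j) | j : 'I_mX].

Definition psi_x : xval n :=
  if mX == 0 then XEmpty n
  else if ~~ odd mX then XEdge n (maxs (As (mX./2).-1)) (mins (As mX./2))
  else XBlock (As mX./2).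

Definition psi : {set {set 'I_n}} * xval n := (psi_sigma, psi_x).
End Psi.

From mathcomp Require Import all_boot zify.
Set Implicit Arguments. Unset Strict Implicit. Unset Printing Implicit Defensive.

(* The blocks of pi meeting both signs behave like nested parentheses.  By
   noncrossing, the positive parts A_1 < ... < A_m of distinct such "mixed"
   blocks occupy disjoint intervals and their negative parts come in the reverse
   order; since -B is mixed whenever B is, the mixed block with positive part A_i
   has negative part A_(m+1-i).  Hence a ~ -b exactly when a is in A_i and b in
   A_(m+1-i) for some i.  A block with B = -B exists iff the middle index exists,
   i.e. m is odd, and its positive part is A_((m+1)/2).  For even m > 0 every
   pair a < b with a ~ -b has a <= max A_(m/2) and min A_(m/2+1) <= b, and merging
   A_(m/2) with A_(m/2+1) turns this closest pair into an edge of sigma. *)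

Lemma antitone_rel_rev m (R : nat -> nat -> Prop) :
    (forall i j, R i j -> i < m /\ j < m) ->
    (forall i, i < m -> exists j, R i j) ->
    (forall i j i' j', R i j -> R i' j' -> i < i' -> j' < j) ->
  forall i j, R i j -> j = m.-1 - i.
Proof.
move=> Rlt Rtotal Ranti.
have upper i j : R i j -> j + i <= m.-1.
  elim: i j => [|i IHi] j Rij; first by have [] := Rlt _ _ Rij; lia.
  have [i_lt _] := Rlt _ _ Rij.
  have [j' Rij'] := Rtotal i (ltnW i_lt).
  by have := IHi _ Rij'; have := Ranti _ _ _ _ Rij' Rij (ltnSn i); lia.
have lower d i j : i + d = m.-1 -> R i j -> m.-1 <= j + i.
  elim: d i j => [|d IHd] i j id_eq Rij; first by lia.
  have [i_lt _] := Rlt _ _ Rij.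
  have [j' Rij'] := Rtotal i.+1 ltac:(lia).
  by have := IHd i.+1 j' ltac:(lia) Rij'; have := Ranti _ _ _ _ Rij Rij' (ltnSn i); lia.
move=> i j Rij; have [i_lt _] := Rlt _ _ Rij.
by have := upper _ _ Rij; have := lower (m.-1 - i) i j ltac:(lia) Rij; lia.
Qed.

Section MaxMin.
Variable n : nat.
Implicit Types (A : {set 'I_n}) (a : 'I_n).

Lemma leq_maxs A a : a \in A -> a <= maxs A.
Proof. exact: leq_bigmax_cond. Qed.

Lemma maxs_mem A : A != set0 -> exists2 a, a \in A & maxs A = a.
Proof.
move=> /set0Pn[a0 a0A]; have /card_gt0P A_gt0 : exists a, a \in A by exists a0.
rewrite /maxs; have [a aA ->] := eq_bigmax_cond (fun i : 'I_n => i : nat) A_gt0.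
by exists a.
Qed.

Lemma geq_mins A a : a \in A -> mins A <= a.
Proof.
move=> aA; rewrite /mins; have : a \in index_enum 'I_n by rewrite mem_index_enum.
elim: (index_enum _) => [|b r IHr] //; rewrite big_cons inE => /predU1P[<-|ar].
  by rewrite aA geq_minl.
case: ifP => _; last exact: IHr ar.
exact: leq_trans (geq_minr _ _) (IHr ar).
Qed.

(* [mins] defaults to [n] on the empty set, a value no element of ['I_n] attains. *)
Lemma mins_mem A : A != set0 -> exists2 a, a \in A & mins A = a.
Proof.
move=> /set0Pn[a0 a0A].
have : mins A = n \/ exists2 a, a \in A & mins A = a.
  rewrite /mins; apply: (big_ind (fun v => v = n \/ exists2 a, a \in A & v = a)).
  - by left.
  - by move=> u v u_ok v_ok; case: (leqP u v).
  - by move=> a aA; right; exists a.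
by case=> // min_n; have := geq_mins a0A; have := ltn_ord a0; lia.
Qed.

End MaxMin.

Definition set_lt n (A C : {set 'I_n}) :=
  forall a c : 'I_n, a \in A -> c \in C -> a < c.

Lemma set_lt_asym n (A C : {set 'I_n}) :
  A != set0 -> C != set0 -> set_lt A C -> ~ set_lt C A.
Proof.
move=> /set0Pn[a aA] /set0Pn[c cC] ltAC ltCA.
by have := ltAC _ _ aA cC; have := ltCA _ _ cC aA; lia.
Qed.

Lemma maxs_set_lt n (A C : {set 'I_n}) :
  A != set0 -> C != set0 -> set_lt A C -> maxs A < maxs C.
Proof.
move=> /maxs_mem[a aA ->] /maxs_mem[c cC ->] ltAC; exact: ltAC.
Qed.

Section NegationAndParts.
Variable n : nat.
Implicit Types (B : {set pm n}) (P : {set {set pm n}}) (i j : pm n).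

Definition negB B : {set 'I_n} := [set k | (k, true) \in B].
Definition mixed B := (posB B != set0) && (negB B != set0).

Lemma mem_negset i B : (i \in negset B) = (negpm i \in B).
Proof.
have negpmK : involutive (@negpm n) by case=> k s; rewrite /negpm /= negbK.
by rewrite -[i in LHS]negpmK (mem_imset _ _ (inv_inj negpmK)).
Qed.

Lemma posB_negset B : posB (negset B) = negB B.
Proof. by apply/setP => k; rewrite !inE mem_negset. Qed.

Lemma negB_negset B : negB (negset B) = posB B.
Proof. by apply/setP => k; rewrite !inE mem_negset. Qed.

Lemma mixed_negset B : mixed (negset B) = mixed B.
Proof. by rewrite /mixed posB_negset negB_negset andbC. Qed.

Lemma hasnegE B : hasneg B = (negB B != set0).
Proof. by apply/existsP/set0Pn => -[k kB]; exists k; rewrite ?inE in kB *. Qed.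

Lemma sameblockP P i j :
  reflect (exists2 B, B \in P & i \in B /\ j \in B) (sameblock P i j).
Proof.
apply: (iffP exists_inP) => [[B PB /andP[iB jB]]|[B PB [iB jB]]]; exists B => //.
by rewrite iB jB.
Qed.

Lemma sameblockC P i j : sameblock P i j = sameblock P j i.
Proof. by apply/sameblockP/sameblockP => -[B PB [? ?]]; exists B. Qed.

Lemma sameblock_negpm P i : sameblock P i (negpm i) = sameblock P (i.1, false) (i.1, true).
Proof. by case: i => k [] //=; rewrite sameblockC. Qed.

End NegationAndParts.

Section NoncrossingB.
Variables (n : nat) (P : {set {set pm n}}).
Hypothesis P_NCB : NCB P.
Implicit Types (B D : {set pm n}) (A : {set 'I_n}).
Local Notation m := (mX P).

Lemma block_eq B D x : B \in P -> D \in P -> x \in B -> x \in D -> B = D.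
Proof.
case: P_NCB => -[/and3P[_ P_triv _] _ _] _ PB PD xB xD.
by rewrite -(def_pblock P_triv PB xB) (def_pblock P_triv PD xD).
Qed.

Lemma negset_block B : B \in P -> negset B \in P.
Proof. by case: P_NCB => -[_ negset_closed _] _; apply: negset_closed. Qed.

Lemma crossing_block_eq B D a b c d : B \in P -> D \in P ->
  rk a < rk b -> rk b < rk c -> rk c < rk d ->
  a \in B -> c \in B -> b \in D -> d \in D -> B = D.
Proof. by case: P_NCB => _ noncross PB PD; apply: (noncross B D PB PD a b c d). Qed.

Lemma mixed_not_between B D (u v w : 'I_n) : B \in P -> D \in P -> negB D != set0 ->
  (u, false) \in B -> (w, false) \in B -> (v, false) \in D -> u < v < w -> B = D.
Proof.
move=> PB PD /set0Pn[e] eD uB wB vD /andP[uv vw]; rewrite inE in eD.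
apply: (crossing_block_eq PB PD _ _ _ uB wB vD eD); rewrite /rk //=.
by have := ltn_ord w; lia.
Qed.

Lemma mixed_set_lt B D (b d : 'I_n) : B \in P -> D \in P -> mixed B -> mixed D ->
  B != D -> b \in posB B -> d \in posB D -> b < d -> set_lt (posB B) (posB D).
Proof.
move=> PB PD /andP[_ negB_B] /andP[_ negB_D] BD; rewrite !inE => bB dD bd p r.
rewrite !inE => pB rD; case: (ltngtP p r) => // [rp|/val_inj pr]; last first.
  by case/eqP: BD; apply: (block_eq PB PD pB); rewrite pr.
case/eqP: BD; case: (ltngtP d p) => [dp|pd|/val_inj dp].
- exact: (mixed_not_between PB PD negB_D bB pB dD) (introT andP (conj bd dp)).
- by symmetry; apply: (mixed_not_between PD PB negB_B rD dD pB); rewrite rp pd.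
- by apply: (block_eq PB PD pB); rewrite -dp.
Qed.

Lemma mixed_sep B D : B \in P -> D \in P -> mixed B -> mixed D -> B != D ->
  set_lt (posB B) (posB D) \/ set_lt (posB D) (posB B).
Proof.
move=> PB PD mB mD BD.
have /andP[/set0Pn[b bB] _] := mB; have /andP[/set0Pn[d dD] _] := mD.
case: (ltngtP b d) => [bd|db|/val_inj bd].
- by left; apply: (mixed_set_lt PB PD mB mD BD bB dD bd).
- by right; apply: (mixed_set_lt PD PB mD mB _ dD bB db); rewrite eq_sym.
- by case/eqP: BD; rewrite !inE bd in bB dD; apply: (block_eq PB PD bB dD).
Qed.

Lemma mixed_negB_rev B D : B \in P -> D \in P -> mixed B -> mixed D -> B != D ->
  set_lt (posB B) (posB D) -> set_lt (negB D) (negB B).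
Proof.
move=> PB PD /andP[/set0Pn[p pB] _] /andP[/set0Pn[r rD] _] BD ltBD a c aD cB.
have pr := ltBD _ _ pB rD; rewrite !inE in pB rD aD cB.
case: (ltngtP a c) => // [ca|/val_inj ac]; case/eqP: BD.
- apply: (crossing_block_eq PB PD (a := (p, false)) (b := (r, false)) (c := (c, true))
    (d := (a, true))) => //; rewrite /rk /=; have := ltn_ord r; lia.
- by apply: (block_eq PB PD cB); rewrite -ac.
Qed.

Lemma XsetP A : reflect (exists2 B, B \in P & mixed B /\ posB B = A) (A \in Xset P).
Proof.
apply: (iffP imsetP) => [[B]|[B PB [/andP[posB_B negB_B] <-]]].
  by rewrite inE hasnegE => /and3P[PB posB_B negB_B] ->; exists B; rewrite /mixed ?posB_B.
by exists B; rewrite // inE PB posB_B hasnegE.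
Qed.

Lemma As_Xset i : i < m -> As P i \in Xset P.
Proof. by move=> im; have := mem_nth set0 im; rewrite mem_sort mem_enum. Qed.

Lemma Xset_As A : A \in Xset P -> exists2 i, i < m & As P i = A.
Proof.
rewrite -mem_enum -(mem_sort (fun A C => maxs A <= maxs C)) => AX.
by exists (index A (Xseq P)); rewrite /mX /As ?index_mem ?nth_index.
Qed.

Lemma As_neq0 i : i < m -> As P i != set0.
Proof. by move/As_Xset/XsetP => [B _ [/andP[] ? _ <-]]. Qed.

Lemma As_size i : As P i != set0 -> i < m.
Proof. by apply: contraR; rewrite -leqNgt => mi; rewrite /As nth_default. Qed.

Lemma As_lt i j : i < j -> j < m -> set_lt (As P i) (As P j).
Proof.
move=> ij jm; have im := ltn_trans ij jm.
have AsD : As P i != As P j.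
  by rewrite (nth_uniq set0 im jm) ?sort_uniq ?enum_uniq // ltn_eqF.
have maxs_le : maxs (As P i) <= maxs (As P j).
  have maxs_trans : transitive (fun A C : {set 'I_n} => maxs A <= maxs C).
    by move=> ? ? ?; apply: leq_trans.
  apply: (sorted_ltn_nth maxs_trans) => //.
  by apply: sort_sorted => A C; apply: leq_total.
have [Ai_neq0 Aj_neq0] := (As_neq0 im, As_neq0 jm).
case/XsetP: (As_Xset im) => B PB [mB Ai]; case/XsetP: (As_Xset jm) => D PD [mD Aj].
rewrite -Ai -Aj in AsD maxs_le Ai_neq0 Aj_neq0 *.
have BD : B != D by apply: contra_neq AsD => ->.
case: (mixed_sep PB PD mB mD BD) => // ltDB.
by have := maxs_set_lt Aj_neq0 Ai_neq0 ltDB; lia.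
Qed.

Lemma As_lt_inv i j : i < m -> j < m -> set_lt (As P i) (As P j) -> i < j.
Proof.
move=> im jm ltij; have Ai_neq0 := As_neq0 im.
case: (ltngtP i j) => // [ji|eq_ij].
  by case: (set_lt_asym Ai_neq0 (As_neq0 jm) ltij); apply: As_lt ji im.
by rewrite -eq_ij in ltij; case: (set_lt_asym Ai_neq0 Ai_neq0 ltij ltij).
Qed.

Lemma As_mem_inj i j k : i < m -> j < m -> k \in As P i -> k \in As P j -> i = j.
Proof.
move=> im jm ki kj; case: (ltngtP i j) => // [ij|ji].
  by have := As_lt ij jm ki kj; rewrite ltnn.
by have := As_lt ji im kj ki; rewrite ltnn.
Qed.

Definition mirror i j :=
  exists2 B, B \in P & [/\ mixed B, posB B = As P i & negB B = As P j].

Lemma mirror_bound i j : mirror i j -> i < m /\ j < m.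
Proof. by case=> B _ [/andP[? ?] Bi Bj]; split; apply: As_size; rewrite -?Bi -?Bj. Qed.

Lemma mirror_total i : i < m -> exists j, mirror i j.
Proof.
move=> im; case/XsetP: (As_Xset im) => B PB [mB Ai].
have /Xset_As[j _ Aj] : negB B \in Xset P.
  by apply/XsetP; exists (negset B); rewrite ?negset_block ?mixed_negset ?posB_negset.
by exists j; exists B => //; split; rewrite ?Aj.
Qed.

Lemma mirror_anti i j i' j' : mirror i j -> mirror i' j' -> i < i' -> j' < j.
Proof.
move=> Rij Rij' ii'; have [_ jm] := mirror_bound Rij; have [i'm j'm] := mirror_bound Rij'.
case: Rij Rij' => B PB [mB Bi Bj] [D PD [mD Di' Dj']].
have ltBD : set_lt (posB B) (posB D) by rewrite Bi Di'; apply: As_lt ii' i'm.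
have BD : B != D.
  apply/eqP => eqBD; rewrite -eqBD in ltBD; case/andP: mB => posB_n0 _.
  exact: (set_lt_asym posB_n0 posB_n0 ltBD ltBD).
have := mixed_negB_rev PB PD mB mD BD ltBD; rewrite Bj Dj'.
exact: As_lt_inv.
Qed.

Lemma mirrorE : forall i j, mirror i j -> j = m.-1 - i.
Proof. exact: (antitone_rel_rev mirror_bound mirror_total mirror_anti). Qed.

Lemma sameblock_posneg (a b : 'I_n) :
  sameblock P (a, false) (b, true) <->
  exists2 i, i < m & a \in As P i /\ b \in As P (m.-1 - i).
Proof.
split=> [/sameblockP[B PB [aB bB]] | [i im [ai bi]]].
  have mB : mixed B by apply/andP; split; apply/set0Pn; [exists a | exists b]; rewrite inE.
  have /Xset_As[i im Ai] : posB B \in Xset P by apply/XsetP; exists B.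
  have /Xset_As[j _ Aj] : negB B \in Xset P.
    by apply/XsetP; exists (negset B); rewrite ?negset_block ?mixed_negset ?posB_negset.
  have Rij : mirror i j by exists B.
  by exists i; rewrite // -(mirrorE Rij) Ai Aj !inE.
have [j Rij] := mirror_total im; have eq_j := mirrorE Rij.
case: Rij => B PB [_ Bi Bj]; apply/sameblockP; exists B => //.
by rewrite -Bi -eq_j -Bj !inE in ai bi.
Qed.

Lemma exists_mixed_pair : (exists a b : 'I_n, sameblock P (a, false) (b, true)) <-> 0 < m.
Proof.
split=> [[a [b /sameblock_posneg[i im _]]] | m_gt0]; first exact: leq_ltn_trans im.
have /set0Pn[a a0] := As_neq0 m_gt0.
have /set0Pn[b bm] : As P m.-1 != set0 by apply: As_neq0; rewrite ltn_predL.
by exists a, b; apply/sameblock_posneg; exists 0; rewrite ?subn0.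
Qed.

Lemma zero_blockE :
  [set k : 'I_n | sameblock P (k, false) (k, true)] = if odd m then As P m./2 else set0.
Proof.
apply/setP => k; rewrite inE; apply/idP/idP => [/sameblock_posneg[i im [ki ki']] | kmid].
  have i'm : m.-1 - i < m by lia.
  have eq_i := As_mem_inj im i'm ki ki'.
  have [-> ->] : odd m /\ m./2 = i by lia.
  exact: ki.
apply/sameblock_posneg; case: ifP kmid => [odd_m kmid | _]; last by rewrite inE.
by exists m./2; [lia | have -> : m.-1 - m./2 = m./2 by lia].
Qed.

Lemma exists_zero_block : (exists i : pm n, sameblock P i (negpm i)) <-> odd m.
Proof.
have zero_pair k : sameblock P (k, false) (k, true) = (k \in if odd m then As P m./2 else set0).
  by rewrite -zero_blockE inE.
split=> [[i] | odd_m]; first by rewrite sameblock_negpm zero_pair; case: ifP; rewrite ?inE.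
have /set0Pn[k kmid] : As P m./2 != set0 by apply: As_neq0; lia.
by exists (k, false); rewrite sameblock_negpm zero_pair odd_m.
Qed.

Lemma leq_maxs_As i j a : i <= j < m -> a \in As P i -> a <= maxs (As P j).
Proof.
move=> /andP[]; rewrite leq_eqVlt => /predU1P[-> _ | ij jm ai]; first exact: leq_maxs.
have [c cj ->] := maxs_mem (As_neq0 jm).
exact: ltnW (As_lt ij jm ai cj).
Qed.

Lemma geq_mins_As i j b : i <= j < m -> b \in As P j -> mins (As P i) <= b.
Proof.
move=> /andP[]; rewrite leq_eqVlt => /predU1P[-> _ | ij jm bj]; first exact: geq_mins.
have [c ci ->] := mins_mem (As_neq0 (ltn_trans ij jm)).
exact: ltnW (As_lt ij jm ci bj).
Qed.

Section EvenCase.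
Hypotheses (m_even : ~~ odd m) (m_gt0 : 0 < m).

Lemma mixed_pair_bounds (a b : 'I_n) : a < b -> sameblock P (a, false) (b, true) ->
  a <= maxs (As P m./2.-1) /\ mins (As P m./2) <= b.
Proof.
move=> ab /sameblock_posneg[i im [ai bi]].
have i_lo : i < m./2.
  rewrite ltnNge; apply/negP => i_hi.
  have mirror_lt : m.-1 - i < i by lia.
  by have := As_lt mirror_lt im bi ai; lia.
by split; [apply: leq_maxs_As ai | apply: geq_mins_As bi]; lia.
Qed.

Lemma center_edge (a b : 'I_n) : a \in As P m./2.-1 -> b \in As P m./2 ->
  maxs (As P m./2.-1) = a -> mins (As P m./2) = b -> is_edge (psi_sigma P) a b.
Proof.
move=> a_lo b_hi max_a min_b.
have lo_m : m./2.-1 < m by lia.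
have hi_m : m./2 < m by lia.
have lt_mid : m./2.-1 < m./2 by lia.
have ab : a < b := As_lt lt_mid hi_m a_lo b_hi.
split=> //; exists (As P m./2.-1 :|: As P m./2).
  rewrite inE; apply/orP; right; apply/imsetP; exists (Ordinal lo_m) => //=.
  by have -> : m.-1 - m./2.-1 = m./2 by lia.
split; rewrite ?inE ?a_lo ?b_hi ?orbT // => k ak kb; rewrite inE negb_or.
by apply/andP; split; apply/negP => kA; [have := leq_maxs kA | have := geq_mins kA]; lia.
Qed.

Lemma psi_edge_spec : exists a b : 'I_n,
  [/\ a < b /\ sameblock P (a, false) (b, true),
      (forall a' b' : 'I_n, a' < b' -> sameblock P (a', false) (b', true) ->
         b - a <= b' - a'),
      (forall a' b' : 'I_n, a' < b' -> sameblock P (a', false) (b', true) ->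
         b' - a' <= b - a -> a' = a /\ b' = b),
      is_edge (psi_sigma P) a b
    & XEdge n (maxs (As P m./2.-1)) (mins (As P m./2)) = XEdge n a b].
Proof.
have lo_m : m./2.-1 < m by lia.
have hi_m : m./2 < m by lia.
have lt_mid : m./2.-1 < m./2 by lia.
have [a a_lo max_a] := maxs_mem (As_neq0 lo_m).
have [b b_hi min_b] := mins_mem (As_neq0 hi_m).
have ab : a < b := As_lt lt_mid hi_m a_lo b_hi.
exists a, b; split.
- split=> //; apply/sameblock_posneg; exists m./2.-1; first lia.
  by have -> : m.-1 - m./2.-1 = m./2 by lia.
- by move=> a' b' ab' /(mixed_pair_bounds ab'); rewrite max_a min_b; lia.
- move=> a' b' ab' /(mixed_pair_bounds ab'); rewrite max_a min_b => -[a'_le b'_ge] le_ab'.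
  by split; apply: ord_inj; lia.
- exact: center_edge.
- by rewrite max_a min_b.
Qed.

End EvenCase.

End NoncrossingB.

Theorem lemma3p2 (n : nat) (P : {set {set pm n}}) (sigma : {set {set 'I_n}})
    (x : xval n) :
  0 < n -> NCB P -> psi P = (sigma, x) ->
  [/\
   (* (1) *)
   (x = XEmpty n <->
      ~ (exists i : pm n, sameblock P i (negpm i)) /\
      ~ (exists i j : 'I_n, sameblock P (i, false) (j, true))),
   (* (2) *)
   ((exists a b, x = XEdge n a b) <->
      ~ (exists i : pm n, sameblock P i (negpm i)) /\
      (exists i j : 'I_n, sameblock P (i, false) (j, true))),
   (~ (exists i : pm n, sameblock P i (negpm i)) /\
      (exists i j : 'I_n, sameblock P (i, false) (j, true)) ->
    exists a b : 'I_n,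
      [/\ a < b /\ sameblock P (a, false) (b, true),
          (forall a' b' : 'I_n, a' < b' -> sameblock P (a', false) (b', true) ->
             b - a <= b' - a'),
          (forall a' b' : 'I_n, a' < b' -> sameblock P (a', false) (b', true) ->
             b' - a' <= b - a -> a' = a /\ b' = b),
          is_edge sigma a b
        & x = XEdge n a b]),
   (* (3) *)
   ((exists A, x = XBlock A) <-> exists i : pm n, sameblock P i (negpm i))
 & ((exists i : pm n, sameblock P i (negpm i)) ->
      x = XBlock [set k : 'I_n | sameblock P (k, false) (k, true)])].
Proof.
move=> _ P_NCB [<- <-].
have zeroE := exists_zero_block P_NCB; have mixedE := exists_mixed_pair P_NCB.
rewrite /psi_x; have [m0 | m_gt0] := posnP (mX P).
  split=> /=.
  - by split=> // _; split=> [/zeroE | /mixedE]; rewrite m0.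
  - by split=> [[? []] // | [_ /mixedE]]; rewrite m0.
  - by case=> _ /mixedE; rewrite m0.
  - by split=> [[] // | /zeroE]; rewrite m0.
  - by move/zeroE; rewrite m0.
have [m_odd | m_even] := boolP (odd (mX P)).
  have zero := zeroE.2 m_odd; split=> /=.
  - by split=> // -[/(_ zero)].
  - by split=> [[? []] // | [/(_ zero)]].
  - by case=> /(_ zero).
  - by split=> // _; eexists.
  - by rewrite (zero_blockE P_NCB) m_odd.
have mixed := mixedE.2 m_gt0.
have no_zero : ~ exists i : pm n, sameblock P i (negpm i).
  by move/zeroE; rewrite (negbTE m_even).
have [a [b [ab_pair min_ab uniq_ab edge_ab eq_x]]] := psi_edge_spec P_NCB m_even m_gt0.
rewrite /= eq_x; split.
- by split=> // -[_ /(_ mixed)].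
- by split=> _; [split | do 2 eexists].
- by exists a, b.
- by split=> [[] | /no_zero].
- by move/no_zero.
Qed.
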